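(* In the $\mathbf N$-agent system described in the context, let $\{\boldsymbol\mu_t^{\mathbf N},\boldsymbol\nu_t^{\mathbf N}\}_{t\ge0}$ be the empirical joint state and action distributions induced by a policy $\boldsymbol\pi=\{\boldsymbol\pi_t\}_{t\ge0}$. Then for every $t\ge0$, $$\mathbb E\big|\boldsymbol\nu_t^{\mathbf N}-\nu^{\mathrm{MF}}(\boldsymbol\mu_t^{\mathbf N},\boldsymbol\pi_t)\big|_1\le\frac1{N_{\mathrm{pop}}}\Big(\sum_{k\in[K]}\sqrt{N_k}\Big)\sqrt{|\mathcal U|}.$$
   Context: Fix $K\ge1$, $N_1,\dots,N_K\ge1$, $[K]=\{1,\dots,K\}$, $N_{\mathrm{pop}}=\sum_kN_k$, finite sets $\mathcal X,\mathcal U$, $\mathcal P(A)$ the probability distributions on $A$, $|\cdot|_1$ the $L_1$ norm. Agent $j\in[N_k]$ of class $k$ has state $x_{j,k}^t\in\mathcal X$ and action $u_{j,k}^t\in\mathcal U$; $\boldsymbol\mu_t^{\mathbf N}(x,k)=\frac1{N_{\mathrm{pop}}}\sum_{j=1}^{N_k}\mathbf 1(x_{j,k}^t=x)$, $\boldsymbol\nu_t^{\mathbf N}(u,k)=\frac1{N_{\mathrm{pop}}}\sum_{j=1}^{N_k}\mathbf 1(u_{j,k}^t=u)$. For each $k$, $P_k:\mathcal X\times\mathcal U\times\mathcal P(\mathcal X\times[K])\times\mathcal P(\mathcal U\times[K])\to\mathcal P(\mathcal X)$ is a transition law. A policy is $\boldsymbol\pi=\{\boldsymbol\pi_t\}_{t\ge0}$,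 $\boldsymbol\pi_t=(\pi_k^t)_k$, with $\pi_k^t:\mathcal X\times\mathcal P(\mathcal X\times[K])\to\mathcal P(\mathcal U)$. Dynamics: conditioned on all states at time $t$, actions are independent across agents with $u_{j,k}^t\sim\pi_k^t(x_{j,k}^t,\boldsymbol\mu_t^{\mathbf N})$; conditioned on all states and actions at time $t$, next states are independent with $x_{j,k}^{t+1}\sim P_k(x_{j,k}^t,u_{j,k}^t,\boldsymbol\mu_t^{\mathbf N},\boldsymbol\nu_t^{\mathbf N})$. For $\boldsymbol\mu\in\mathcal P(\mathcal X\times[K])$ and decision rules $(\pi_k)_k$: $\nu^{\mathrm{MF}}(\boldsymbol\mu,\boldsymbol\pi)(u,k)=\sum_x\pi_k(x,\boldsymbol\mu)(u)\boldsymbol\mu(x,k)$. *)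

From HB Require Import structures.
From mathcomp Require Import all_boot all_order all_algebra.
Set Implicit Arguments. Unset Strict Implicit. Unset Printing Implicit Defensive.
Import Order.TTheory GRing.Theory Num.Theory.
Local Open Scope ring_scope.

Section MF.
Variables (R : rcfType) (X U : finType) (K : nat) (N : 'I_K -> nat).

Definition agent := {k : 'I_K & 'I_(N k)}.
Definition sconf := {ffun agent -> X}.
Definition aconf := {ffun agent -> U}.

Definition Npop : nat := \sum_(k < K) N k.

Definition is_pdist (A : finType) (f : A -> R) : Prop :=
  (forall a, 0 <= f a) /\ \sum_a f a = 1.

Definition emp_mu (c : sconf) : {ffun X * 'I_K -> R} :=
  [ffun xk => (\sum_(j < N xk.2) ((c (Tagged (fun k => 'I_(N k)) j) == xk.1) : nat)%:R)
               / (Npop%:R)].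

Definition emp_nu (a : aconf) : {ffun U * 'I_K -> R} :=
  [ffun uk => (\sum_(j < N uk.2) ((a (Tagged (fun k => 'I_(N k)) j) == uk.1) : nat)%:R)
               / (Npop%:R)].

Definition decision_rule := 'I_K -> X -> {ffun X * 'I_K -> R} -> {ffun U -> R}.

Definition nuMF (mu : {ffun X * 'I_K -> R}) (pik : decision_rule) : {ffun U * 'I_K -> R} :=
  [ffun uk => \sum_x pik uk.2 x mu uk.1 * mu (x, uk.2)].

Definition L1 (A : finType) (f g : A -> R) : R := \sum_a `|f a - g a|.

Definition act_prob (pi : nat -> decision_rule) (t : nat) (c : sconf) (a : aconf) : R :=
  \prod_(i : agent) pi t (tag i) (c i) (emp_mu c) (a i).

Definition trans_law :=
  'I_K -> X -> U -> {ffun X * 'I_K -> R} -> {ffun U * 'I_K -> R} -> {ffun X -> R}.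

Definition trans_prob (P : trans_law) (c : sconf) (a : aconf) (c' : sconf) : R :=
  \prod_(i : agent) P (tag i) (c i) (a i) (emp_mu c) (emp_nu a) (c' i).

Fixpoint state_law (mu0 : {ffun sconf -> R}) (pi : nat -> decision_rule) (P : trans_law)
    (t : nat) : {ffun sconf -> R} :=
  match t with
  | 0 => mu0
  | t'.+1 => [ffun c' => \sum_(c : sconf) \sum_(a : aconf)
               state_law mu0 pi P t' c * act_prob pi t' c a * trans_prob P c a c']
  end.

Definition expected_dev (mu0 : {ffun sconf -> R}) (pi : nat -> decision_rule) (P : trans_law)
    (t : nat) : R :=
  \sum_(c : sconf) \sum_(a : aconf)
    state_law mu0 pi P t c * act_prob pi t c a * L1 (emp_nu a) (nuMF (emp_mu c) (pi t)).

End MF.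

From mathcomp Require Import all_boot all_order all_algebra.
From mathcomp Require Import ring lra.
Set Implicit Arguments. Unset Strict Implicit. Unset Printing Implicit Defensive.
Import Order.TTheory GRing.Theory Num.Theory.
Local Open Scope ring_scope.

(* Given the joint state, actions are independent across agents, so for a class k and an
   action u the scaled deviation Npop (nu^N - nu^MF)(u, k) is a sum of N_k independent
   centred indicators 1(u_j = u) - pi_k(x_j, mu)(u).  Its second moment is the sum of the
   individual variances, hence at most s_u = sum_j pi_k(x_j, mu)(u); Jensen bounds the first
   absolute moment by sqrt s_u, and Cauchy-Schwarz with sum_u s_u = N_k gives
   sum_u sqrt s_u <= sqrt (N_k |U|).  Averaging over the law of the state at time t, a
   probability distribution, yields the bound. *)

Section ProductDistribution.
Variables (R : rcfType) (I J : finType) (p : I -> J -> R).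

Definition prod_dist (a : {ffun I -> J}) : R := \prod_i p i (a i).

Lemma sum_prod_dist_mul (f : I -> J -> R) :
  \sum_a prod_dist a * \prod_i f i (a i) = \prod_i \sum_j p i j * f i j.
Proof. by rewrite bigA_distr_bigA /=; apply: eq_bigr => a _; rewrite -big_split. Qed.

Lemma prod_dist_ge0 : (forall i j, 0 <= p i j) -> forall a, 0 <= prod_dist a.
Proof. by move=> p_ge0 a; apply: prodr_ge0 => i _. Qed.

Hypothesis p_sum1 : forall i, \sum_j p i j = 1.

Lemma sum_prod_dist : \sum_a prod_dist a = 1.
Proof. by rewrite -bigA_distr_bigA big1. Qed.

Lemma sum_prod_dist_mul_in (A : {set I}) (f : I -> J -> R) :
  \sum_a prod_dist a * \prod_(i in A) f i (a i) = \prod_(i in A) \sum_j p i j * f i j.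
Proof.
pose g i j := if i \in A then f i j else 1.
transitivity (\sum_a prod_dist a * \prod_i g i (a i)).
  by under eq_bigr do rewrite big_mkcond.
rewrite sum_prod_dist_mul [RHS]big_mkcond; apply: eq_bigr => i _.
by rewrite /g; case: ifP => // _; under eq_bigr do rewrite mulr1.
Qed.

Lemma prod_dist_expect1 (i0 : I) (g : J -> R) :
  \sum_a prod_dist a * g (a i0) = \sum_j p i0 j * g j.
Proof.
transitivity (\sum_a prod_dist a * \prod_(i in [set i0]) g (a i)).
  by apply: eq_bigr => a _; rewrite big_set1.
by rewrite (sum_prod_dist_mul_in _ (fun _ => g)) big_set1.
Qed.

Lemma prod_dist_expect2 (i0 i1 : I) (g h : J -> R) : i0 != i1 ->
  \sum_a prod_dist a * (g (a i0) * h (a i1))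
  = (\sum_j p i0 j * g j) * (\sum_j p i1 j * h j).
Proof.
move=> ne01; pose f i := if i == i0 then g else h.
have pair_prod (F : I -> R) : \prod_(i in [set i0; i1]) F i = F i0 * F i1.
  by rewrite big_setU1 ?inE //= big_set1.
transitivity (\sum_a prod_dist a * \prod_(i in [set i0; i1]) f i (a i)).
  by apply: eq_bigr => a _; rewrite pair_prod /f eqxx eq_sym (negbTE ne01).
by rewrite sum_prod_dist_mul_in pair_prod /f eqxx eq_sym (negbTE ne01).
Qed.

End ProductDistribution.

Lemma prod_dist_pdist (R : rcfType) (I J : finType) (p : I -> J -> R) :
  (forall i, is_pdist (p i)) -> is_pdist (prod_dist p).
Proof.
move=> p_pdist; split; last by apply: sum_prod_dist => i; case: (p_pdist i).
by apply: prod_dist_ge0 => i; case: (p_pdist i).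
Qed.

Section Moments.
Variables (R : rcfType) (A : finType) (w : A -> R).
Hypothesis w_ge0 : forall a, 0 <= w a.

Lemma sum_mul_norm_sqr_le (z : A -> R) :
  (\sum_a w a * `|z a|) ^+ 2 <= (\sum_a w a) * \sum_a w a * z a ^+ 2.
Proof.
set m := \sum_a w a * `|z a|; set W := \sum_a w a; set Q := \sum_a w a * z a ^+ 2.
have expand a b : w a * w b * (`|z a| - `|z b|) ^+ 2
    = w a * z a ^+ 2 * w b + w b * z b ^+ 2 * w a
      - (w a * `|z a|) * (w b * `|z b|) *+ 2.
  rewrite -(real_normK (num_real (z a))) -(real_normK (num_real (z b))).
  by move: (w a) (w b) `|z a| `|z b| => x y u v; ring.
(* Lagrange: the double sum below equals 2 (W Q - m^2). *)
have : 0 <= \sum_a \sum_b w a * w b * (`|z a| - `|z b|) ^+ 2.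
  by apply: sumr_ge0 => a _; apply: sumr_ge0 => b _; rewrite mulr_ge0 ?sqr_ge0 ?mulr_ge0.
under eq_bigr do under eq_bigr do rewrite expand.
under eq_bigr do rewrite sumrB big_split /= sumrMnl -!mulr_sumr -mulr_suml.
rewrite sumrB big_split /= sumrMnl -mulr_suml -mulr_sumr -mulr_suml -/m -/W -/Q.
rewrite -expr2; lra.
Qed.

Lemma sum_mul_norm_le_sqrt (z : A -> R) : \sum_a w a = 1 ->
  \sum_a w a * `|z a| <= Num.sqrt (\sum_a w a * z a ^+ 2).
Proof.
move=> w_sum1; have := sum_mul_norm_sqr_le z; rewrite w_sum1 mul1r => le_sqr.
have m_ge0 : 0 <= \sum_a w a * `|z a| by apply: sumr_ge0 => a _; rewrite mulr_ge0.
by rewrite -(ger0_norm m_ge0) -sqrtr_sqr; apply: ler_wsqrtr.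
Qed.

End Moments.

Lemma sum_sqrt_le (R : rcfType) (A : finType) (s : A -> R) : (forall a, 0 <= s a) ->
  \sum_a Num.sqrt (s a) <= Num.sqrt (#|A|%:R * \sum_a s a).
Proof.
move=> s_ge0.
have le_sqr := sum_mul_norm_sqr_le (fun _ => ler01) (fun a => Num.sqrt (s a)).
have sum_norm : \sum_a 1 * `|Num.sqrt (s a)| = \sum_a Num.sqrt (s a).
  by apply: eq_bigr => a _; rewrite mul1r ger0_norm ?sqrtr_ge0.
have sum_sqr : \sum_a 1 * Num.sqrt (s a) ^+ 2 = \sum_a s a.
  by apply: eq_bigr => a _; rewrite mul1r sqr_sqrtr.
rewrite sum_norm sum_sqr sumr_const in le_sqr.
have sum_ge0 : 0 <= \sum_a Num.sqrt (s a) by apply: sumr_ge0 => a _; apply: sqrtr_ge0.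
by rewrite -(ger0_norm sum_ge0) -sqrtr_sqr; apply: ler_wsqrtr.
Qed.

Section CenteredIndicator.
Variables (R : rcfType) (J : finType) (q : J -> R) (u : J).

Lemma sum_mul_eq_indicator : \sum_v q v * (v == u)%:R = q u.
Proof.
rewrite (bigD1 u) //= eqxx mulr1 big1 ?addr0 // => v /negbTE->.
by rewrite mulr0.
Qed.

Hypothesis q_sum1 : \sum_v q v = 1.

Lemma centered_indicator_mean : \sum_v q v * ((v == u)%:R - q u) = 0.
Proof.
under eq_bigr do rewrite mulrBr.
by rewrite sumrB sum_mul_eq_indicator -mulr_suml q_sum1 mul1r subrr.
Qed.

Lemma centered_indicator_variance :
  \sum_v q v * ((v == u)%:R - q u) ^+ 2 = q u * (1 - q u).
Proof.
have expand v : q v * ((v == u)%:R - q u) ^+ 2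
    = q v * (v == u)%:R * (1 - q u *+ 2) + q u ^+ 2 * q v.
  by case: (v == u) => /=; ring.
under eq_bigr do rewrite expand.
rewrite big_split /= -mulr_suml -mulr_sumr sum_mul_eq_indicator q_sum1.
ring.
Qed.

End CenteredIndicator.

Section IndependentSum.
Variables (R : rcfType) (I J B : finType) (p : I -> J -> R) (T : B -> I).
Hypotheses (p_ge0 : forall i j, 0 <= p i j) (p_sum1 : forall i, \sum_j p i j = 1).
Hypothesis T_inj : injective T.

Lemma prod_dist_sum_sqr (Y : B -> J -> R) :
    (forall b, \sum_j p (T b) j * Y b j = 0) ->
  \sum_a prod_dist p a * (\sum_b Y b (a (T b))) ^+ 2
  = \sum_b \sum_j p (T b) j * Y b j ^+ 2.
Proof.
move=> Y_mean0.
under eq_bigr do rewrite expr2 mulr_suml mulr_sumr.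
under eq_bigr do under eq_bigr do rewrite !mulr_sumr.
rewrite exchange_big; apply: eq_bigr => b _.
rewrite exchange_big (bigD1 b) //= [X in _ + X]big1 ?addr0; last first.
  move=> b' ne_b'b; rewrite (prod_dist_expect2 p_sum1 (Y b) (Y b')).
    by rewrite Y_mean0 mul0r.
  by apply: contra ne_b'b => /eqP/T_inj->.
by rewrite -prod_dist_expect1.
Qed.

Lemma prod_dist_indicator_dev_le (u : J) :
  \sum_a prod_dist p a * `|\sum_b ((a (T b) == u)%:R - p (T b) u)|
  <= Num.sqrt (\sum_b p (T b) u).
Proof.
pose Y b (v : J) := (v == u)%:R - p (T b) u.
apply: le_trans (sum_mul_norm_le_sqrt (prod_dist_ge0 p_ge0) _ (sum_prod_dist p_sum1)) _.
apply: ler_wsqrtr; rewrite (prod_dist_sum_sqr (Y := Y)); last first.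
  by move=> b; apply: centered_indicator_mean.
apply: ler_sum => b _; rewrite centered_indicator_variance //.
by rewrite mulrBr mulr1 lerBlDr lerDl sqr_ge0.
Qed.

Lemma prod_dist_L1_indicator_dev_le :
  \sum_a prod_dist p a * \sum_u `|\sum_b ((a (T b) == u)%:R - p (T b) u)|
  <= Num.sqrt (#|B|%:R) * Num.sqrt (#|J|%:R).
Proof.
under eq_bigr do rewrite mulr_sumr.
rewrite exchange_big /=.
apply: le_trans (ler_sum _ (fun u _ => prod_dist_indicator_dev_le u)) _.
apply: le_trans (sum_sqrt_le _) _; first by move=> u; apply: sumr_ge0.
rewrite exchange_big /= (eq_bigr (fun _ => 1)) => [|b _]; last exact: p_sum1.
by rewrite sumr_const mulrC sqrtrM ?ler0n.
Qed.

End IndependentSum.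

Section MeanField.
Variables (R : rcfType) (X U : finType) (K : nat) (N : 'I_K -> nat).

Local Notation agent_of := (@Tagged 'I_K _ (fun k => 'I_(N k))).

Lemma agent_of_inj (k : 'I_K) : injective (@Tagged 'I_K k (fun k => 'I_(N k))).
Proof. by move=> j j' /eqP; rewrite eq_Tagged => /eqP. Qed.

Lemma nuMF_emp_mu (c : sconf X N) (pik : decision_rule R X U K) u k :
  nuMF (emp_mu R c) pik (u, k)
  = (\sum_(j < N k) pik k (c (agent_of j)) (emp_mu R c) u) / (Npop N)%:R.
Proof.
rewrite ffunE; under eq_bigr do rewrite ffunE mulrA.
rewrite -mulr_suml; congr (_ / _).
under eq_bigr do rewrite mulr_sumr.
rewrite /= exchange_big /=; apply: eq_bigr => j _.
rewrite (bigD1 (c (agent_of j))) //= eqxx mulr1 big1 ?addr0 // => x ne_x.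
by rewrite eq_sym (negbTE ne_x) mulr0.
Qed.

Lemma L1_emp_nu_nuMF (c : sconf X N) (pik : decision_rule R X U K) (a : aconf U N) :
  L1 (emp_nu R a) (nuMF (emp_mu R c) pik)
  = (\sum_k \sum_u
       `|\sum_(j < N k) ((a (agent_of j) == u)%:R - pik k (c (agent_of j)) (emp_mu R c) u)|)
    / (Npop N)%:R.
Proof.
transitivity (\sum_u \sum_k `|emp_nu R a (u, k) - nuMF (emp_mu R c) pik (u, k)|).
  by rewrite pair_bigA; apply: eq_bigr => -[].
rewrite exchange_big mulr_suml; apply: eq_bigr => k _.
rewrite mulr_suml; apply: eq_bigr => u _.
by rewrite ffunE nuMF_emp_mu -mulrBl -sumrB normrM normfV normr_nat.
Qed.

Lemma expected_L1_dev_le (pi : nat -> decision_rule R X U K) (t : nat) (c : sconf X N) :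
    (forall k x mu, is_pdist (pi t k x mu)) ->
  \sum_a act_prob pi t c a * L1 (emp_nu R a) (nuMF (emp_mu R c) (pi t))
  <= (\sum_k Num.sqrt ((N k)%:R : R)) * Num.sqrt (#|U|%:R : R) / (Npop N)%:R.
Proof.
move=> pi_pdist; pose p (i : agent N) := pi t (tag i) (c i) (emp_mu R c).
have p_ge0 i u : 0 <= p i u by case: (pi_pdist (tag i) (c i) (emp_mu R c)).
have p_sum1 i : \sum_u p i u = 1 by case: (pi_pdist (tag i) (c i) (emp_mu R c)).
under eq_bigr do rewrite L1_emp_nu_nuMF mulrA.
rewrite -mulr_suml; apply: ler_wpM2r; first by rewrite invr_ge0 ler0n.
under eq_bigr do rewrite mulr_sumr.
rewrite exchange_big mulr_suml; apply: ler_sum => k _.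
rewrite -[in X in _ <= X](card_ord (N k)).
exact: (prod_dist_L1_indicator_dev_le p_ge0 p_sum1 (@agent_of_inj k)).
Qed.

Lemma state_law_pdist (mu0 : {ffun sconf X N -> R}) (pi : nat -> decision_rule R X U K)
    (P : trans_law R X U K) t :
    is_pdist mu0 -> (forall t k x mu, is_pdist (pi t k x mu)) ->
    (forall k x u mu nu, is_pdist (P k x u mu nu)) ->
  is_pdist (state_law mu0 pi P t).
Proof.
move=> mu0_pdist pi_pdist P_pdist; elim: t => [//|t [law_ge0 law_sum1]] /=.
have act_pdist (c : sconf X N) : is_pdist (act_prob pi t c).
  by apply: (prod_dist_pdist (p := fun i => pi t (tag i) (c i) (emp_mu R c))).
have trans_pdist (c : sconf X N) (a : aconf U N) : is_pdist (trans_prob P c a).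
  by apply: (prod_dist_pdist (p := fun i => P (tag i) (c i) (a i) (emp_mu R c) (emp_nu R a))).
split=> [c'|].
  rewrite ffunE; apply: sumr_ge0 => c _; apply: sumr_ge0 => a _.
  by rewrite !mulr_ge0 ?(act_pdist c).1 ?(trans_pdist c a).1.
under eq_bigr do rewrite ffunE.
rewrite exchange_big -[RHS]law_sum1; apply: eq_bigr => c _.
rewrite exchange_big -[RHS]mulr1 -(act_pdist c).2 mulr_sumr; apply: eq_bigr => a _.
by rewrite -mulr_sumr (trans_pdist c a).2 mulr1.
Qed.

End MeanField.

Theorem lemma6 (R : rcfType) (X U : finType) (K : nat) (N : 'I_K -> nat)
  (hK : (0 < K)%N) (hN : forall k, (0 < N k)%N)
  (mu0 : {ffun sconf X N -> R})
  (pi : nat -> decision_rule R X U K)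
  (P : trans_law R X U K)
  (hmu0 : is_pdist mu0)
  (hpi : forall t k x mu, is_pdist (pi t k x mu))
  (hP : forall k x u mu nu, is_pdist (P k x u mu nu))
  (t : nat) :
  expected_dev mu0 pi P t <=
    (\sum_(k < K) Num.sqrt ((N k)%:R : R)) * Num.sqrt (#|U|%:R : R) / (Npop N)%:R.
Proof.
have [law_ge0 law_sum1] := state_law_pdist t hmu0 hpi hP.
rewrite /expected_dev; set bound := (X in _ <= X).
rewrite -[bound]mul1r -law_sum1 mulr_suml.
apply: ler_sum => c _; under eq_bigr do rewrite -mulrA.
by rewrite -mulr_sumr; apply: ler_wpM2l => //; apply: expected_L1_dev_le.
Qed.
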